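(* Let $\Gamma$ be a finite monoid generating set of $V$. For $z \in \{0,1\}^+$ define $L_z = \{w \in \Gamma^+ : w(z0^\omega) \neq z0^\omega\}$. Then $L_z \subseteq \mathrm{cowp}_\Gamma(V)$, and $L_z^{\mathrm{rev}}$ is a deterministic context-free language over the alphabet $\Gamma$.
   Context: Thompson group $V$: a prefix code is a set $P \subseteq \{0,1\}^*$ in which no element is a proper prefix of another; it is maximal if it is contained in no larger prefix code. Each bijection $\varphi: P\to Q$ between finite maximal prefix codes defines a homeomorphism of the Cantor space $\{0,1\}^\omega$ by $pt \mapsto \varphi(p)t$ ($p\in P$, $t \in\{0,1\}^\omega$); $V$ is the group of all such homeomorphisms under composition. A monoid generating set $\Gamma \subseteq V$ is a set such that every element of $V$ is a product of elements of $\Gamma$; it is regarded as a finite alphabet. For $w = a_n \cdots a_1\in\Gamma^+$, $w(\cdot)$ denotes the homeomorphism $a_n\circ\cdots\circ a_1$ ($a_1$ applied first). $\mathrm{cowp}_\Gamma(V) = \{w\in\Gamma^* : w \text{ does not evaluate to the identity of } V\}$. $0^\omega$ is the all-zero sequence. $L^{\mathrm{rev}} = \{w^{\mathrm{rev}}: w\in L\}$ with $(a_1\cdots a_n)^{\mathrm{rev}} = a_n\cdots a_1$. *)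

From mathcomp Require Import all_boot.
Set Implicit Arguments. Unset Strict Implicit. Unset Printing Implicit Defensive.

Definition cantor := nat -> bool.

Definition cat_inf (p : seq bool) (t : cantor) : cantor :=
  fun n => if n < size p then nth false p n else t (n - size p).

Definition zeros : cantor := fun _ => false.

Definition is_prefix (u v : seq bool) : Prop := exists s, v = u ++ s.
Definition proper_prefix (u v : seq bool) : Prop := is_prefix u v /\ u <> v.

Definition prefix_code (P : seq bool -> Prop) : Prop :=
  forall u v, P u -> P v -> ~ proper_prefix u v.

Definition finite_maximal_prefix_code (P : seq (seq bool)) : Prop :=
  prefix_code (fun x => x \in P) /\
  forall R : seq bool -> Prop, prefix_code R ->
    (forall x, x \in P -> R x) -> forall x, R x -> x \in P.

(** f is an element of Thompson's group V: it is the homeomorphism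
    p t |-> phi(p) t induced by a bijection phi : P -> Q between finite
    maximal prefix codes. *)
Definition inV (f : cantor -> cantor) : Prop :=
  exists (P Q : seq (seq bool)) (phi : seq bool -> seq bool),
    [/\ finite_maximal_prefix_code P, finite_maximal_prefix_code Q,
        {in P, forall p, phi p \in Q},
        {in P &, injective phi} &
        {in Q, forall q, exists2 p, p \in P & phi p = q}] /\
    {in P, forall p, forall (t : cantor) (n : nat),
        f (cat_inf p t) n = cat_inf (phi p) t n}.

(** Evaluation of a word w = a_n ... a_1 (as the list [:: a_n; ...; a_1])
    as the homeomorphism g a_n o ... o g a_1 (a_1 applied first). *)
Definition eval_word (S : Type) (g : S -> cantor -> cantor) (w : seq S)
  : cantor -> cantor :=
  foldr (fun a h => g a \o h) id w.

(** Gamma = image of g is a monoid generating set of V. *)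
Definition monoid_generates (S : Type) (g : S -> cantor -> cantor) : Prop :=
  forall f, inV f -> exists w : seq S, forall x n, f x n = eval_word g w x n.

Definition cowp (S : Type) (g : S -> cantor -> cantor) (w : seq S) : Prop :=
  exists x n, eval_word g w x n != x n.

Definition Lz (S : Type) (g : S -> cantor -> cantor) (z : seq bool) (w : seq S)
  : Prop :=
  w <> [::] /\
  exists n, eval_word g w (cat_inf z zeros) n != cat_inf z zeros n.

Definition lang_rev (S : Type) (L : seq S -> Prop) : seq S -> Prop :=
  fun u => exists w, L w /\ u = rev w.

Record dpda (S : finType) : Type := Dpda {
  dp_state : finType;
  dp_stack : finType;
  dp_start : dp_state;
  dp_bottom : dp_stack;
  dp_final : pred dp_state;
  dp_delta : dp_state -> option S -> dp_stack -> option (dp_state * seq dp_stack);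
  dp_det : forall q X, dp_delta q None X <> None ->
             forall a, dp_delta q (Some a) X = None
}.

Section DPDA.
Variables (S : finType) (M : dpda S).

Definition dp_config := (@dp_state S M * seq S * seq (@dp_stack S M))%type.

Inductive dp_step : dp_config -> dp_config -> Prop :=
| dp_step_read q a w X gam p beta :
    @dp_delta S M q (Some a) X = Some (p, beta) ->
    dp_step (q, a :: w, X :: gam) (p, w, beta ++ gam)
| dp_step_eps q w X gam p beta :
    @dp_delta S M q None X = Some (p, beta) ->
    dp_step (q, w, X :: gam) (p, w, beta ++ gam).

Inductive dp_steps : dp_config -> dp_config -> Prop :=
| dp_steps_refl c : dp_steps c c
| dp_steps_cons c1 c2 c3 : dp_step c1 c2 -> dp_steps c2 c3 -> dp_steps c1 c3.

Definition dp_accepts (w : seq S) : Prop :=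
  exists q gam, @dp_final S M q /\
    dp_steps (@dp_start S M, w, [:: @dp_bottom S M]) (q, [::], gam).
End DPDA.

Definition DCFL (S : finType) (L : seq S -> Prop) : Prop :=
  exists M : dpda S, forall w, L w <-> dp_accepts M w.

From mathcomp Require Import all_boot.
From Stdlib Require Import FunctionalExtensionality Classical ClassicalEpsilon.
From mathcomp Require Import zify.
Set Implicit Arguments. Unset Strict Implicit. Unset Printing Implicit Defensive.

(* The machine reads a_1 ... a_n, i.e. the letters in the order in which they
   act, and keeps the current point v 0^omega on its store as the word v, first
   bit on top, the bottom marker standing for 0^omega.  To apply a generator,
   given on a finite maximal prefix code P by p t |-> phi(p) t, it pops bits
   while walking down the finite tree of prefixes of P until it has read some
   p in P (at the bottom it reads zeros without popping), and then pushes
   phi(p).  Whether the current point is z 0^omega is a finite-state property of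
   the store: each cell records, for every suffix of z, whether the word from
   that cell down equals this suffix up to trailing zeros, and this record is
   computed from the record of the cell beneath.  The accepting flag of the
   control state is read off the top cell. *)

Definition point (u : seq bool) : cantor := cat_inf u zeros.

Lemma pointE u n : point u n = nth false u n.
Proof. by rewrite /point /cat_inf; case: ltnP => // h; rewrite nth_default. Qed.

Lemma cat_inf0 t : cat_inf [::] t = t.
Proof. by apply: functional_extensionality => n; rewrite /cat_inf /= subn0. Qed.

Lemma cat_inf_cat p q t : cat_inf (p ++ q) t = cat_inf p (cat_inf q t).
Proof.
apply: functional_extensionality => n; rewrite /cat_inf size_cat nth_cat.
case: (ltnP n (size p)) => h; first by rewrite (leq_trans h) // leq_addr.
by rewrite ltn_subLR // subnDA.
Qed.

Lemma cat_inf_rcons p b t : cat_inf (rcons p b) t = cat_inf p (cat_inf [:: b] t).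
Proof. by rewrite -cats1 cat_inf_cat. Qed.

Lemma point_cat p v : point (p ++ v) = cat_inf p (point v).
Proof. by rewrite /point cat_inf_cat. Qed.

Lemma point_behead v : point v = cat_inf [:: nth false v 0] (point (behead v)).
Proof.
apply: functional_extensionality => -[|n]; rewrite /cat_inf /=; first by rewrite pointE.
by rewrite subn1 /= !pointE nth_behead.
Qed.

Definition eqpad (v w : seq bool) : bool :=
  all (fun i => nth false v i == nth false w i) (iota 0 (maxn (size v) (size w))).

Lemma eqpadP v w : reflect (forall n, nth false v n = nth false w n) (eqpad v w).
Proof.
apply: (iffP allP) => [h n|h i _]; last by rewrite h.
case: (ltnP n (maxn (size v) (size w))) => hn; first by apply/eqP/h; rewrite mem_iota.
by rewrite !nth_default // (leq_trans _ hn) // ?leq_maxl ?leq_maxr.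
Qed.

Lemma eqpad_pointP v w : reflect (point v = point w) (eqpad v w).
Proof.
apply: (iffP (eqpadP v w)) => [h|h n]; last by rewrite -!pointE h.
by apply: functional_extensionality => n; rewrite !pointE.
Qed.

(* If no element of [P] were a prefix of the word [y] formed by the first
   [\max_(p <- P) size p] bits of [x], then [P] plus [y] would be a prefix code,
   so [y \in P] by maximality: a contradiction. *)
Lemma finite_maximal_prefix_code_cover P x : finite_maximal_prefix_code P ->
  exists2 p, p \in P & forall i, i < size p -> nth false p i = x i.
Proof.
case=> hP hM; set K := \max_(p <- P) size p.
have hK p : p \in P -> size p <= K by move=> pP; rewrite /K (big_rem p pP) leq_maxl.
set y := mkseq x K.
have prefix_y p : p \in P -> prefix p y -> forall i, i < size p -> nth false p i = x i.
  move=> pP /prefixP [s ys] i hi.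
  have hiK : i < K by apply: leq_trans hi (hK _ pP).
  by have := congr1 (nth false ^~ i) ys; rewrite nth_cat hi nth_mkseq // => <-.
have [/hasP [p pP hp]|/hasPn hn] := boolP (has (fun p => prefix p y) P).
  by exists p => //; apply: prefix_y.
have yP : y \in P.
  apply: (hM (fun v => v \in P \/ v = y)); [|by left|by right].
  move=> u v [uP|->] [vP|->]; [exact: hP| | |by case].
  - by case=> -[s ys] _; have := hn _ uP; rewrite ys prefix_prefix.
  - case=> -[[|c s] vs] ne; first by rewrite vs cats0 in ne.
    by have := hK _ vP; rewrite vs size_cat size_mkseq -[X in _ <= X]addn0 leq_add2l.
by have := hn _ yP; rewrite prefix_refl.
Qed.

Lemma lang_revE (S : Type) (L : seq S -> Prop) u : lang_rev L u <-> L (rev u).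
Proof. by split=> [[w [Lw ->]]|Lu]; [rewrite revK | exists (rev u); rewrite revK]. Qed.

Lemma eval_word_rcons (S : Type) (g : S -> cantor -> cantor) s a x :
  eval_word g (rcons s a) x = eval_word g s (g a x).
Proof. by elim: s => //= b s ->. Qed.

Lemma LzE (S : Type) (g : S -> cantor -> cantor) z w :
  Lz g z w <-> w <> [::] /\ eval_word g w (point z) <> point z.
Proof.
split=> -[wn0 hw]; split=> //; first by case: hw => n /eqP hn he; rewrite he in hn.
apply: NNPP => hn; apply: hw; apply: functional_extensionality => n.
by apply/eqP/negPn/negP => hne; apply: hn; exists n.
Qed.

Section SuffixTables.
Variable z : seq bool.

(* Entry [k] of [table v] tells whether [v] equals [drop k z] up to trailing
   zeros. *)
Definition suffix_table := {ffun 'I_(size z).+1 -> bool}.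

Definition table (v : seq bool) : suffix_table :=
  [ffun k : 'I_(size z).+1 => eqpad v (drop k z)].

Definition next_suffix (k : 'I_(size z).+1) : 'I_(size z).+1 :=
  inord (minn k.+1 (size z)).

Definition table_cons (b : bool) (A : suffix_table) : suffix_table :=
  [ffun k : 'I_(size z).+1 => (b == nth false z k) && A (next_suffix k)].

Lemma nth_next_suffix k n : nth false z (next_suffix k + n) = nth false z (k.+1 + n).
Proof.
rewrite /next_suffix inordK; last by rewrite ltnS geq_minr.
case: (ltnP k (size z)) => h; first by rewrite (minn_idPl h).
by rewrite (minn_idPr (leqW h)) !nth_default //; lia.
Qed.

Lemma tableE b v : table (b :: v) = table_cons b (table v).
Proof.
apply/ffunP => k; rewrite !ffunE; apply/eqpadP/andP => [h|[/eqP hb /eqpadP h] [|n]] /=.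
- split; first by have := h 0; rewrite nth_drop addn0 /= => ->.
  by apply/eqpadP => n; have := h n.+1; rewrite /= !nth_drop nth_next_suffix addnS.
- by rewrite nth_drop addn0.
- by rewrite h !nth_drop nth_next_suffix addnS.
Qed.

Definition table_cat (w : seq bool) (A : suffix_table) : suffix_table :=
  foldr table_cons A w.

Lemma table_catE w v : table_cat w (table v) = table (w ++ v).
Proof. by elim: w => //= b w ->; rewrite tableE. Qed.

(* Stack symbols: [None] is the bottom marker, [Some (b, A)] a bit [b] above a
   word with table [A]. *)
Definition cell := option (bool * suffix_table).

Fixpoint encode (v : seq bool) : seq cell :=
  if v is b :: v' then Some (b, table v') :: encode v' else [:: None].

Fixpoint push_cells (w : seq bool) (A : suffix_table) : seq cell :=
  if w is b :: w' then Some (b, table_cat w' A) :: push_cells w' A else [::].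

Lemma push_cells_encode w v : push_cells w (table v) ++ encode v = encode (w ++ v).
Proof. by elim: w => //= b w ->; rewrite table_catE. Qed.

Definition top_cell v : cell := if v is b :: v' then Some (b, table v') else None.

Lemma encode_top v : encode v = top_cell v :: behead (encode v).
Proof. by case: v. Qed.

Definition cell_table (X : cell) : suffix_table :=
  if X is Some (b, A) then table_cons b A else table [::].

Lemma cell_table_top v : cell_table (top_cell v) = table v.
Proof. by case: v => //= b v; rewrite tableE. Qed.

End SuffixTables.

Section DeterministicRuns.
Variables (S : finType) (M : dpda S).

Definition halted (c : dp_config M) : Prop := forall c', ~ @dp_step S M c c'.

Lemma dp_step_det c c1 c2 : @dp_step S M c c1 -> dp_step c c2 -> c1 = c2.
Proof.
case=> [q a w X gam p beta|q w X gam p beta] h1 h2;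
  inversion h2 as [q' a' w' X' gam' p' beta' h2'|q' w' X' gam' p' beta' h2']; subst.
- by move: h1; rewrite h2' => -[-> ->].
- by move: h1; rewrite (dp_det (d := M) (q := q) (X := X)) ?h2'.
- by move: h2'; rewrite (dp_det (d := M) (q := q) (X := X)) ?h1.
- by move: h1; rewrite h2' => -[-> ->].
Qed.

Lemma dp_steps_trans c1 c2 c3 :
  dp_steps c1 c2 -> dp_steps c2 c3 -> @dp_steps S M c1 c3.
Proof. by elim=> // a b c s _ IH /IH; apply: dp_steps_cons. Qed.

Lemma dp_steps_halted c d e :
  @dp_steps S M c d -> halted d -> dp_steps c e -> dp_steps e d.
Proof.
elim=> [c0|c1 c2 c3 s12 s23 IH] hd he.
  by case: he hd => [c0'|c0' c2' c3' s _] hd; [exact: dp_steps_refl | case: (hd _ s)].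
case: he s12 IH => [c1'|c1' c2' c3' s' h'] s12 IH; first exact: dp_steps_cons s12 s23.
by rewrite (dp_step_det s12 s') in IH; apply: IH.
Qed.

Lemma dp_steps_from_halted d e : @dp_steps S M e d -> halted e -> e = d.
Proof. by case=> // c1 c2 c3 s _ h; case: (h _ s). Qed.

End DeterministicRuns.

Section LzRevDpda.
Variables (Sigma : finType) (g : Sigma -> cantor -> cantor) (z : seq bool).
Variables (dom : Sigma -> seq (seq bool)) (phi : Sigma -> seq bool -> seq bool).
Hypothesis dom_code : forall a, finite_maximal_prefix_code (dom a).
Hypothesis g_action :
  forall a, {in dom a, forall p t, g a (cat_inf p t) = cat_inf (phi a p) t}.

Definition prefix_nodes : seq (seq bool) :=
  [::] :: flatten [seq [seq take i p | i <- iota 0 (size p).+1]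
                  | p <- flatten [seq dom a | a <- enum Sigma]].

Definition node_index := 'I_(size prefix_nodes).

Definition node (p : seq bool) : node_index := inord (index p prefix_nodes).

Lemma nodeK p : p \in prefix_nodes -> nth [::] prefix_nodes (node p) = p.
Proof. by move=> h; rewrite /node inordK ?nth_index ?index_mem. Qed.

Lemma take_prefix_nodes a p i : p \in dom a -> i <= size p -> take i p \in prefix_nodes.
Proof.
move=> hp hi; rewrite inE; apply/orP; right; apply/flatten_mapP; exists p.
  by apply/flatten_mapP; exists a; rewrite ?mem_enum.
by apply/mapP; exists i; rewrite ?mem_iota.
Qed.

(* [None] pushes the encoding of [z]; [Some (inl f)] is ready to read a letter,
   [f] telling whether the current point differs from [z 0^omega];
   [Some (inr (a, i))] is applying [a] and has popped the [i]-th prefix node. *)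
Definition state := option (bool + (Sigma * node_index)).

Definition delta (q : state) (o : option Sigma) (X : cell z)
    : option (state * seq (cell z)) :=
  match q, o with
  | None, None => Some (Some (inl false), push_cells z (cell_table X) ++ [:: X])
  | Some (inl _), Some a => Some (Some (inr (a, node [::])), [:: X])
  | Some (inr (a, i)), None =>
      let p := nth [::] prefix_nodes i in
      if p \in dom a then
        Some (Some (inl (~~ table_cat (phi a p) (cell_table X) ord0)),
              push_cells (phi a p) (cell_table X) ++ [:: X])
      else if X is Some (b, _) then Some (Some (inr (a, node (rcons p b))), [::])
      else Some (Some (inr (a, node (rcons p false))), [:: None])
  | _, _ => None
  end.

Lemma delta_det q X : delta q None X <> None -> forall a, delta q (Some a) X = None.
Proof. by case: q => [[f|[a i]]|]. Qed.

Definition final (q : state) : bool := if q is Some (inl f) then f else false.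

Definition Lz_rev_dpda : dpda Sigma := Dpda None None final delta_det.

Lemma eps_step q X q' beta w st st' : delta q None X = Some (q', beta) ->
  st = X :: behead st -> st' = beta ++ behead st ->
  @dp_step Sigma Lz_rev_dpda (q, w, st) (q', w, st').
Proof. by move=> h -> ->; apply: (@dp_step_eps _ Lz_rev_dpda). Qed.

Lemma halted_reading f (st : seq (cell z)) :
  halted (M := Lz_rev_dpda) (Some (inl f), [::], st).
Proof. by move=> c h; inversion h. Qed.

Lemma apply_leaf_steps a p v r : p \in prefix_nodes -> p \in dom a ->
  exists v', @dp_steps Sigma Lz_rev_dpda (Some (inr (a, node p)), r, encode z v)
                                 (Some (inl (~~ eqpad v' z)), r, encode z v') /\
             point v' = g a (cat_inf p (point v)).
Proof.
move=> pN hp; exists (phi a p ++ v); split; last by rewrite point_cat g_action.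
apply: dp_steps_cons; last exact: dp_steps_refl.
apply: (eps_step (X := top_cell z v)) (encode_top z v) _.
  by rewrite /= nodeK // hp cell_table_top table_catE ffunE drop0.
by rewrite -catA /= -encode_top push_cells_encode.
Qed.

(* [pst] is the element of [dom a] that the current point begins with; each
   step pops one more of its bits, so the induction is on [size pst - size p]. *)
Lemma apply_prefix_steps a pst p v r : pst \in dom a -> take (size p) pst = p ->
  (forall i, i < size pst -> nth false pst i = cat_inf p (point v) i) ->
  exists v', @dp_steps Sigma Lz_rev_dpda (Some (inr (a, node p)), r, encode z v)
                                 (Some (inl (~~ eqpad v' z)), r, encode z v') /\
             point v' = g a (cat_inf p (point v)).
Proof.
move=> hpst; move: {2}(size pst - size p) (erefl (size pst - size p)) => k.
elim: k p v => [|k IH] p v hk htk hpre;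
  have hle : size p <= size pst by rewrite -htk size_take_min geq_minr.
all: have pN : p \in prefix_nodes by rewrite -htk (take_prefix_nodes hpst hle).
all: have [hp|hp] := boolP (p \in dom a); first exact: apply_leaf_steps.
  have e : size p = size pst by lia.
  by move: hp; rewrite -htk e take_size hpst.
have hlt : size p < size pst by lia.
set b := nth false v 0.
have hb : nth false pst (size p) = b by rewrite hpre // /cat_inf ltnn subnn pointE.
have [|||v' [st ev']] := IH (rcons p b) (behead v).
- by rewrite size_rcons; lia.
- by rewrite size_rcons (take_nth false hlt) htk hb.
- by move=> i hi; rewrite hpre // cat_inf_rcons -point_behead.
exists v'; split; last by rewrite ev' cat_inf_rcons -point_behead.
apply: dp_steps_cons st; case: v {hb ev' hpre} @b => [|c v] /=.
- apply: (@dp_step_eps _ Lz_rev_dpda _ _ _ [::] _ [:: None]).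
  by rewrite /= nodeK // (negbTE hp).
- apply: (@dp_step_eps _ Lz_rev_dpda _ _ _ _ _ [::]).
  by rewrite /= nodeK // (negbTE hp).
Qed.

Lemma apply_letter_steps a f v r : exists v',
  @dp_steps Sigma Lz_rev_dpda (Some (inl f), a :: r, encode z v)
                       (Some (inl (~~ eqpad v' z)), r, encode z v') /\
  point v' = g a (point v).
Proof.
have [pst hpst hpre] := finite_maximal_prefix_code_cover (point v) (dom_code a).
have [|v' [st ev']] := apply_prefix_steps (p := [::]) (v := v) r hpst (take0 _).
  by move=> i hi; rewrite cat_inf0 hpre.
exists v'; split; last by rewrite ev' cat_inf0.
apply: dp_steps_cons st; rewrite encode_top.
exact: (@dp_step_read _ Lz_rev_dpda _ _ _ _ _ _ [:: top_cell z v]).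
Qed.

Lemma read_word_steps u v f : exists v',
  @dp_steps Sigma Lz_rev_dpda (Some (inl f), u, encode z v)
    (Some (inl (if u is [::] then f else ~~ eqpad v' z)), [::], encode z v') /\
  point v' = eval_word g (rev u) (point v).
Proof.
elim: u v f => [|a u IH] v f; first by exists v; split; [exact: dp_steps_refl|].
have [v1 [st1 ev1]] := apply_letter_steps a f v u.
have [v' [st ev']] := IH v1 (~~ eqpad v1 z).
exists v'; split; last by rewrite rev_cons eval_word_rcons ev' ev1.
case: u {IH} st1 st ev' => [|c u] st1 st ev'; last exact: dp_steps_trans st1 st.
suff -> : eqpad v' z = eqpad v1 z by exact: dp_steps_trans st1 st.
by apply/eqpad_pointP/eqpad_pointP; rewrite ev'.
Qed.

Lemma Lz_rev_dpda_accepts u :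
  dp_accepts Lz_rev_dpda u <-> u <> [::] /\ eval_word g (rev u) (point z) <> point z.
Proof.
have [v' [run ev']] := read_word_steps u z false.
have init :
    @dp_step Sigma Lz_rev_dpda (None, u, [:: None]) (Some (inl false), u, encode z z).
  apply: (eps_step (X := None)) => //.
  by rewrite cats0 -[X in encode z X]cats0 -push_cells_encode.
have {init}run' := dp_steps_cons init run.
set F := if u is [::] then false else ~~ eqpad v' z in run'.
have F_true : F <-> u <> [::] /\ eval_word g (rev u) (point z) <> point z.
  rewrite -ev' /F; clear run run' F; case: u ev' => [|a u] _; first by split=> // -[].
  by split=> [/eqpad_pointP h|[_ /eqpad_pointP]].
rewrite -F_true; split.
- case=> q [gam [hq hs]]; case: q hq hs => [[[]|[? ?]]|] // _ hs.
  have := dp_steps_halted run' (@halted_reading _ _) hs.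
  by move/dp_steps_from_halted => /(_ (@halted_reading _ _)) [<-].
- by move=> hF; exists (Some (inl true)), (encode z v'); rewrite -hF.
Qed.

End LzRevDpda.

Lemma inV_prefix_action f :
  inV f -> exists Pphi : seq (seq bool) * (seq bool -> seq bool),
  finite_maximal_prefix_code Pphi.1 /\
  {in Pphi.1, forall p t, f (cat_inf p t) = cat_inf (Pphi.2 p) t}.
Proof.
case=> P [Q [phi [[hP _ _ _ _] hf]]]; exists (P, phi); split=> // p hp t.
by apply: functional_extensionality => n; apply: hf.
Qed.

Lemma rev_eq_nil (T : Type) (u : seq T) : (rev u = [::]) <-> (u = [::]).
Proof. by split=> h; [rewrite -(revK u) h | rewrite h]. Qed.

Theorem lemma3p3 (Sigma : finType) (g : Sigma -> cantor -> cantor)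
  (HV : forall a, inV (g a)) (Hinj : injective g)
  (Hgen : monoid_generates g)
  (z : seq bool) (Hz : z <> [::]) :
  (forall w, Lz g z w -> cowp g w) /\ DCFL (lang_rev (Lz g z)).
Proof.
split; first by move=> w [_ [n hn]]; exists (cat_inf z zeros), n.
have [code hcode] := choice _ (fun a => inV_prefix_action (HV a)).
exists (Lz_rev_dpda z (fun a => (code a).1) (fun a => (code a).2)) => u.
have [dom_code g_action] := (fun a => proj1 (hcode a), fun a => proj2 (hcode a)).
rewrite lang_revE LzE (Lz_rev_dpda_accepts z dom_code g_action).
by split=> -[hu ?]; split=> // /rev_eq_nil.
Qed.
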